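(* Let $\gamma > 0$. Suppose $G$ is a graph on $n$ vertices such that $d(x) + d(y) \geq (1+2\gamma) n$ for all pairs of distinct non-adjacent vertices $x, y \in V(G)$. Let $d_1 \leq \dots \leq d_n$ be the degree sequence of $G$. Then for all $i < n/2$, $$d_i \geq i + \gamma n \quad \text{or} \quad d_{n-i-\gamma n} \geq n - i.$$
   Context: Floors and ceilings are omitted where they do not affect the argument (e.g. $\gamma n$ is treated as an integer). *)

From mathcomp Require Import all_boot all_order all_algebra.
From mathcomp Require Import reals.
Set Implicit Arguments. Unset Strict Implicit. Unset Printing Implicit Defensive.

(* A finite simple graph is a symmetric irreflexive relation e on a finType T;
   the vertex set is T, so n = #|T|. *)

Definition deg (T : finType) (e : rel T) (x : T) : nat := #|[set y | e x y]|.

Definition degseq (T : finType) (e : rel T) : seq nat :=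
  sort leq [seq deg e x | x <- enum T].

(* d_j, 1-indexed: d e j = the j-th smallest degree (1 <= j <= #|T|) *)
Definition dseq (T : finType) (e : rel T) (j : nat) : nat :=
  nth 0 (degseq e) j.-1.

From mathcomp Require Import all_boot all_order all_algebra.
From mathcomp Require Import reals.
From mathcomp Require Import zify.
Import Order.TTheory GRing.Theory Num.Theory.

Set Implicit Arguments.
Unset Strict Implicit.
Unset Printing Implicit Defensive.

(* Write k = gamma n, so the hypothesis reads d(x) + d(y) >= n + 2k for
   non-adjacent x != y, and let L be the set of vertices of degree < n - i.
   If d_{n-i-k} < n - i then |L| >= n - i - k.
   - If d_i < i + k, pick x of degree d_i: each of its n - 1 - d(x) >= n - i - k
     non-neighbours has degree >= n + 2k - d(x) > n - i, so lies outside L.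
     Hence 2(n - i - k) <= n.
   - If n <= 2(i + k) + 1, every vertex of L has at least i non-neighbours, all
     of degree > 2k + i, and such a vertex has fewer than n - 2k - i - 1
     non-neighbours.  Double counting the non-adjacent pairs between L and the
     high-degree vertices, which lie outside L, is then impossible. *)

Section DegreeSequence.
Variables (T : finType) (e : rel T).

Lemma count_degseq (P : pred nat) :
  count P (degseq e) = #|[set v | P (deg e v)]|.
Proof.
rewrite (permP (permEl (perm_sort _ _))) -sum1_count big_map -sum1dep_card.
by rewrite big_enum_cond; apply: eq_bigl => v; rewrite inE.
Qed.

Lemma size_degseq : size (degseq e) = #|T|.
Proof. by rewrite size_sort size_map cardE. Qed.

Lemma dseq_deg p : (1 <= p <= #|T|)%N -> exists x, dseq e p = deg e x.
Proof.
move=> /andP[p_gt0 p_le_n].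
have : dseq e p \in degseq e by apply: mem_nth; rewrite size_degseq; lia.
by rewrite (perm_mem (permEl (perm_sort _ _))) => /mapP[x _ ->]; exists x.
Qed.

Lemma dseq_lt_card p c : (1 <= p <= #|T|)%N -> (dseq e p < c)%N ->
  (p <= #|[set v | deg e v < c]|)%N.
Proof.
move=> /andP[p_gt0 p_le_n] dp_lt_c.
have sorted_deg : sorted leq (degseq e) by apply: sort_sorted; exact: leq_total.
have size_take_p : size (take p (degseq e)) = p by rewrite size_takel ?size_degseq.
have all_lt : all (fun d => d < c)%N (take p (degseq e)).
  apply/(all_nthP 0) => q; rewrite size_take_p => q_lt_p; rewrite nth_take //.
  apply: leq_ltn_trans dp_lt_c.
  by apply: (sorted_leq_nth leq_trans leqnn); rewrite ?inE ?size_degseq //; lia.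
rewrite -(count_degseq (fun d => d < c)%N) -(cat_take_drop p (degseq e)) count_cat.
by move: all_lt; rewrite all_count size_take_p => /eqP ->; exact: leq_addr.
Qed.

End DegreeSequence.

Section Counting.
Variable T : finType.

Lemma disjoint_card_leq (A B : {set T}) :
  [disjoint A & B] -> (#|A| + #|B| <= #|T|)%N.
Proof.
move=> dAB; have /eqP <- : #|A :|: B| == (#|A| + #|B|)%N.
  by rewrite (leq_card_setU A B).2.
exact: max_card.
Qed.

Lemma card_setIdE (A : {set T}) (P : pred T) :
  #|[set x in A | P x]| = \sum_(x in A) (P x : nat).
Proof. by rewrite -sum1dep_card big_mkcondr; apply: eq_bigr => x _; case: (P x). Qed.

Lemma double_count (A B : {set T}) (r : rel T) :
  \sum_(a in A) #|[set b in B | r a b]| = \sum_(b in B) #|[set a in A | r a b]|.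
Proof.
rewrite (eq_bigr _ (fun a _ => card_setIdE B (r a))) exchange_big.
by apply: eq_bigr => b _; rewrite card_setIdE.
Qed.

End Counting.

Section OreCondition.
Variables (T : finType) (e : rel T) (k : nat).
Hypotheses (e_sym : symmetric e) (e_irr : irreflexive e).
Hypothesis ore : forall x y : T, x != y -> ~~ e x y ->
  (#|T| + k.*2 <= deg e x + deg e y)%N.

Definition nonnbr (x : T) : {set T} := [set y | (x != y) && ~~ e x y].

Lemma nonnbr_sym x y : (y \in nonnbr x) = (x \in nonnbr y).
Proof. by rewrite !inE eq_sym e_sym. Qed.

Lemma deg_add_card_nonnbr x : (deg e x + #|nonnbr x|).+1 = #|T|.
Proof.
have -> : nonnbr x = ~: [set y | e x y] :\ x.
  by apply/setP => y; rewrite !inE eq_sym.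
have := cardsD1 x (~: [set y | e x y]); rewrite !inE e_irr /=.
by rewrite /deg -(cardsC [set y | e x y]) => ->; rewrite add1n addnS.
Qed.

Lemma ore_nonnbr x y : y \in nonnbr x -> (#|T| + k.*2 <= deg e x + deg e y)%N.
Proof. by rewrite inE => /andP[]; exact: ore. Qed.

Lemma dseq_ore_sparse i : (1 <= i)%N -> (i + k < #|T|)%N ->
  (dseq e i < i + k)%N -> (dseq e (#|T| - i - k) < #|T| - i)%N ->
  (#|T| <= (i + k).*2)%N.
Proof.
move=> i_gt0 ik_lt_n di_lt dj_lt.
have [x dx] : exists x, dseq e i = deg e x by apply: dseq_deg; lia.
set L := [set v | deg e v < #|T| - i]%N.
have L_big : (#|T| - i - k <= #|L|)%N by apply: dseq_lt_card; lia.
have disj : [disjoint L & nonnbr x].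
  rewrite disjoints_subset; apply/subsetP => y; rewrite inE in_setC => y_L.
  by apply/negP => /ore_nonnbr; lia.
have := disjoint_card_leq disj; have := deg_add_card_nonnbr x; lia.
Qed.

Lemma dseq_ore_dense i : (1 <= i)%N -> (i + k < #|T|)%N ->
  (#|T| <= (i + k).*2.+1)%N -> (#|T| - i <= dseq e (#|T| - i - k))%N.
Proof.
move=> i_gt0 ik_lt_n n_le; rewrite leqNgt; apply/negP => dj_lt.
set L := [set v | deg e v < #|T| - i]%N.
set H := [set w | k.*2 + i < deg e w]%N.
have L_big : (#|T| - i - k <= #|L|)%N by apply: dseq_lt_card; lia.
have disj : [disjoint L & H].
  by rewrite disjoints_subset; apply/subsetP => v; rewrite !inE; lia.
have from_L c : c \in L -> (i <= #|[set w in H | w \in nonnbr c]|)%N.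
  rewrite inE => c_L.
  have -> : [set w in H | w \in nonnbr c] = nonnbr c.
    apply/setP => w; rewrite !inE; apply/andb_idl => /andP[cw ncw].
    by have := ore cw ncw; lia.
  by have := deg_add_card_nonnbr c; lia.
have to_H w : w \in H ->
    (#|[set c in L | w \in nonnbr c]| <= #|T| - k.*2 - i - 2)%N.
  rewrite inE => w_H.
  have : (#|[set c in L | w \in nonnbr c]| <= #|nonnbr w|)%N.
    by apply: subset_leq_card; apply/subsetP => c; rewrite inE nonnbr_sym => /andP[].
  by have := deg_add_card_nonnbr w; lia.
have lower : (#|L| * i <= \sum_(c in L) #|[set w in H | w \in nonnbr c]|)%N.
  by rewrite -sum_nat_const; apply: leq_sum.
have upper : (\sum_(w in H) #|[set c in L | w \in nonnbr c]|
              <= #|H| * (#|T| - k.*2 - i - 2))%N.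
  by rewrite -sum_nat_const; apply: leq_sum.
have := disjoint_card_leq disj.
move: lower upper; rewrite (double_count L H (fun c w => w \in nonnbr c)); nia.
Qed.

End OreCondition.

Local Open Scope ring_scope.

Theorem lemma2p2 (R : realType) (gamma : R) (T : finType) (e : rel T) (k : nat) :
  symmetric e -> irreflexive e ->
  0 < gamma ->
  gamma * (#|T|%:R) = k%:R ->
  (forall x y : T, x != y -> ~~ e x y ->
     (1 + 2 * gamma) * (#|T|%:R) <= (deg e x + deg e y)%:R) ->
  forall i : nat, (1 <= i)%N -> (i.*2 < #|T|)%N ->
  (i + k < #|T|)%N ->
  (i%:R + gamma * (#|T|%:R) <= (dseq e i)%:R :> R)
  \/ (#|T| - i <= dseq e (#|T| - i - k))%N.
Proof.
(* Neither [0 < gamma] nor [i.*2 < #|T|] is needed for the argument. *)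
move=> e_sym e_irr _ gamma_n ore_R i i_gt0 _ ik_lt_n.
have ore x y : x != y -> ~~ e x y -> (#|T| + k.*2 <= deg e x + deg e y)%N.
  move=> xy nxy; have := ore_R x y xy nxy.
  by rewrite mulrDl mul1r -mulrA gamma_n -natrM -natrD ler_nat mul2n.
rewrite gamma_n -natrD ler_nat.
have [n_le | n_gt] := leqP #|T| (i + k).*2.+1.
  by right; apply: dseq_ore_dense.
have [| di_lt] := leqP (i + k) (dseq e i); [by left | right].
rewrite leqNgt; apply/negP => dj_lt.
by have := dseq_ore_sparse e_irr ore i_gt0 ik_lt_n di_lt dj_lt; lia.
Qed.
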